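(* Let $P,Q$ be probability measures on $\mathbb{R}^d$ with $P\ll Q$ and $Q\ll P$, and let $\alpha\in\mathbb{R}\setminus\{0,1\}$. Then $$D_{\alpha}(Q\|P)=\sup_{T:\mathbb{R}^d\to\mathbb{R}}\Big\{\frac{1}{\alpha(1-\alpha)}-\frac{1}{\alpha}E_Q\big[e^{\alpha T}\big]-\frac{1}{1-\alpha}E_P\big[e^{(\alpha-1)T}\big]\Big\},$$ where the supremum is over all measurable $T:\mathbb{R}^d\to\mathbb{R}$ with $E_P[e^{(\alpha-1)T}]<\infty$ and $E_Q[e^{\alpha T}]<\infty$. Equality (attainment of the supremum) holds for $T^*$ satisfying $\frac{dQ}{dP}=e^{-T^*}$.
   Context: The $\alpha$-divergence is $D_{\alpha}(Q\|P)=E_P\Big[\frac{1}{\alpha(\alpha-1)}\Big\{\big(\frac{dQ}{dP}\big)^{1-\alpha}-1\Big\}\Big]$ for $\alpha\in\mathbb{R}\setminus\{0,1\}$. *)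

From HB Require Import structures.
From mathcomp Require Import all_boot all_order all_algebra.
From mathcomp Require Import all_classical all_reals all_analysis.
Set Implicit Arguments. Unset Strict Implicit. Unset Printing Implicit Defensive.
Import Order.TTheory GRing.Theory Num.Theory.
Local Open Scope classical_set_scope.
Local Open Scope ring_scope.
Local Open Scope charge_scope.

(* R^d is modelled as [d.-tuple R] with its
   canonical product (coordinate-generated) sigma-algebra over the Borel sets of R. *)

Definition rn_deriv (R : realType) (d : nat)
    (Q P : probability (d.-tuple R) R) : d.-tuple R -> \bar R :=
  ('d (charge_of_finite_measure Q) '/d P). 

Definition alpha_div (R : realType) (d : nat) (alpha : R)
    (Q P : probability (d.-tuple R) R) : \bar R :=
  (\int[P]_x (((fine (rn_deriv Q P x)) `^ (1 - alpha) - 1)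
                 / (alpha * (alpha - 1)))%:E)%E.

Definition admissible (R : realType) (d : nat) (alpha : R)
    (Q P : probability (d.-tuple R) R) (T : d.-tuple R -> R) : Prop :=
  [/\ measurable_fun [set: d.-tuple R] T,
      (\int[P]_x (expR ((alpha - 1) * T x))%:E < +oo)%E &
      (\int[Q]_x (expR (alpha * T x))%:E < +oo)%E].

Definition alpha_objective (R : realType) (d : nat) (alpha : R)
    (Q P : probability (d.-tuple R) R) (T : d.-tuple R -> R) : \bar R :=
  ((alpha * (1 - alpha))^-1%:E
   - alpha^-1%:E * \int[Q]_x (expR (alpha * T x))%:E
   - (1 - alpha)^-1%:E * \int[P]_x (expR ((alpha - 1) * T x))%:E)%E.

From HB Require Import structures.
From mathcomp Require Import all_boot all_order all_algebra.
From mathcomp Require Import all_classical all_reals all_analysis.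
From mathcomp Require Import measurable_realfun ring lra.
Import Order.TTheory GRing.Theory Num.Theory numFieldNormedType.Exports.
Local Open Scope classical_set_scope.
Local Open Scope ring_scope.
Local Open Scope charge_scope.

(* For y > 0 the function
     t |-> 1/(a(1-a)) - y e^(a t)/a - e^((a-1) t)/(1-a)
   has derivative e^((a-1) t) (1 - y e^t), so its maximum is attained at
   t = -ln y and equals f(y) = (y^(1-a) - 1)/(a(a-1)); below, the inequality is
   obtained in each of the cases a < 0, 0 < a < 1, 1 < a from Jensen's inequality
   for exp.  Writing E_Q[e^(aT)] = E_P[(dQ/dP) e^(aT)], the objective of an
   admissible T is the P-integral of this function at (dQ/dP, T), hence at most
   D_a(Q||P) = E_P[f(dQ/dP)], with equality when T = -ln(dQ/dP) P-a.e.  The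
   supremum is reached along the truncations of -ln(dQ/dP) to [|ln(dQ/dP)| <= n]:
   they are bounded, hence admissible, their integrands increase with n and are
   eventually equal to f(dQ/dP), so monotone convergence applies after
   subtracting the integrable integrand of the first truncation. *)

Lemma expR_convex_comb {R : realType} (t x y : R) : 0 <= t -> t <= 1 ->
  expR (t * x + (1 - t) * y) <= t * expR x + (1 - t) * expR y.
Proof. by move=> t0 t1; have := convex_expR (Itv01 t0 t1) x y; rewrite !convRE. Qed.

Section alpha_pointwise.
Context {R : realType} (a : R).
Hypotheses (a0 : a != 0) (a1 : a != 1).

Let aB1_neq0 : a - 1 != 0. Proof. by rewrite subr_eq0. Qed.
Let sub1a_neq0 : 1 - a != 0. Proof. by rewrite subr_eq0 eq_sym. Qed.

Lemma alpha_gap_ge0 (u : R) :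
  0 <= ((a - 1) * expR (a * u) - a * expR ((a - 1) * u) + 1) / (a * (a - 1)).
Proof.
have [aN|a_ge0] := ltP a 0.
  have t0 : 0 <= (1 - a)^-1 by rewrite invr_ge0; lra.
  have t1 : (1 - a)^-1 <= 1 by rewrite invf_le1; lra.
  have := expR_convex_comb _ 0 ((a - 1) * u) t0 t1.
  rewrite mulr0 add0r expR0 mulr1.
  have -> : (1 - (1 - a)^-1) * ((a - 1) * u) = a * u by field.
  rewrite -subr_ge0 => jensen.
  have -> : (a - 1) * expR (a * u) - a * expR ((a - 1) * u) + 1 =
    (1 - a) * ((1 - a)^-1 + (1 - (1 - a)^-1) * expR ((a - 1) * u) - expR (a * u)).
    by field.
  by apply: divr_ge0; [apply: mulr_ge0 => //; lra | nra].
have [a_gt1|a_le1] := ltP 1 a.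
  have t0 : 0 <= a^-1 by rewrite invr_ge0; lra.
  have t1 : a^-1 <= 1 by rewrite invf_le1; lra.
  have := expR_convex_comb _ 0 (a * u) t0 t1.
  rewrite mulr0 add0r expR0 mulr1 mulrA.
  have -> : (1 - a^-1) * a = a - 1 by field.
  rewrite -subr_ge0 => jensen.
  have -> : (a - 1) * expR (a * u) - a * expR ((a - 1) * u) + 1 =
    a * (a^-1 + (1 - a^-1) * expR (a * u) - expR ((a - 1) * u)).
    by field.
  by apply: divr_ge0; [apply: mulr_ge0 => //; lra | nra].
have a_gt0 : 0 < a by rewrite lt_neqAle eq_sym a0.
have a_lt1 : a < 1 by rewrite lt_neqAle a1.
have := expR_convex_comb _ ((a - 1) * u) (a * u) (ltW a_gt0) (ltW a_lt1).
have -> : a * ((a - 1) * u) + (1 - a) * (a * u) = 0 by ring.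
rewrite expR0 -subr_ge0 => jensen.
have -> : ((a - 1) * expR (a * u) - a * expR ((a - 1) * u) + 1) / (a * (a - 1)) =
  (a * expR ((a - 1) * u) + (1 - a) * expR (a * u) - 1) / (a * (1 - a)).
  by field; rewrite a0 aB1_neq0 sub1a_neq0.
by apply: divr_ge0 => //; nra.
Qed.

Definition alpha_gen (y : R) : R := (y `^ (1 - a) - 1) / (a * (a - 1)).

(* The integrand of [alpha_objective] once E_Q[e^(aT)] is written as
   E_P[y e^(aT)] with y = dQ/dP. *)
Definition alpha_dual (y t : R) : R :=
  (a * (1 - a))^-1 - a^-1 * (y * expR (a * t)) - (1 - a)^-1 * expR ((a - 1) * t).

Lemma alpha_dual_le (y t : R) : 0 < y -> alpha_dual y t <= alpha_gen y.
Proof.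
move=> y0; rewrite -subr_ge0.
set A := expR ((1 - a) * ln y).
have Q_term : y * expR (a * t) = A * expR (a * (ln y + t)).
  by rewrite /A -{1}[y]lnK // -!expRD; congr expR; ring.
have P_term : expR ((a - 1) * t) = A * expR ((a - 1) * (ln y + t)).
  by rewrite /A -expRD; congr expR; ring.
have -> : alpha_gen y - alpha_dual y t = A *
    (((a - 1) * expR (a * (ln y + t)) - a * expR ((a - 1) * (ln y + t)) + 1) /
     (a * (a - 1))).
  rewrite /alpha_gen /alpha_dual /powR gt_eqF // -/A Q_term P_term.
  by field; rewrite a0 aB1_neq0 sub1a_neq0.
exact: mulr_ge0 (expR_ge0 _) (alpha_gap_ge0 _).
Qed.

Lemma alpha_dual_lnN (y : R) : 0 < y -> alpha_dual y (- ln y) = alpha_gen y.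
Proof.
move=> y0; rewrite /alpha_dual /alpha_gen /powR gt_eqF //.
have -> : y * expR (a * - ln y) = expR ((1 - a) * ln y).
  by rewrite -{1}[y]lnK // -expRD; congr expR; ring.
have -> : (a - 1) * - ln y = (1 - a) * ln y by ring.
by field; rewrite a0 aB1_neq0 sub1a_neq0.
Qed.

End alpha_pointwise.

Section integral_ge0_shift.
Context {d : measure_display} {T : measurableType d} {R : realType}.
Context {mu : {measure set T -> \bar R}}.
Local Open Scope ereal_scope.

Lemma ge0_lty_integrable (f : T -> R) : measurable_fun setT f ->
  (forall x, 0 <= f x)%R -> \int[mu]_x (f x)%:E < +oo ->
  mu.-integrable setT (EFin \o f).
Proof.
move=> mf f0 f_lty; apply/integrableP; split; first exact/measurable_EFinP.
by under eq_integral do rewrite /= ger0_norm ?f0//.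
Qed.

Lemma ge0_integralD_integrable (g k : T -> R) :
  measurable_fun setT g -> (forall x, 0 <= g x)%R ->
  mu.-integrable setT (EFin \o k) ->
  \int[mu]_x (g x + k x)%:E = \int[mu]_x (g x)%:E + \int[mu]_x (k x)%:E.
Proof.
move=> mg g0 ik.
have mk : measurable_fun setT k by have /integrableP[/measurable_EFinP] := ik.
have kfin := integrable_fin_num measurableT ik.
have [gfin|] := ltP (\int[mu]_x (g x)%:E) +oo.
  by rewrite -(integralD_EFin measurableT (ge0_lty_integrable _ mg g0 gfin) ik).
(* Otherwise g <= (g + k)^+ + k^- forces the positive part of g + k to have
   infinite integral, while its negative part is dominated by k^-. *)
rewrite leye_eq => /eqP ginf; rewrite ginf addye ?fin_num_ninfty//.
set h := fun x => (g x + k x)%:E.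
have mh : measurable_fun setT h by apply/measurable_EFinP; exact: measurable_funD.
have kN_fin := integral_funeneg_lt_pinfty measurableT ik.
have hN_fin : \int[mu]_x h^\- x < +oo.
  apply: le_lt_trans kN_fin; apply: ge0_le_integral => //.
  - exact: measurable_funeneg.
  - exact/measurable_funeneg/measurable_EFinP.
  - move=> x _; apply: (@funeneg_le _ _ setT); last exact: in_setT.
    by move=> y _; rewrite lee_fin lerDr.
have g_le : \int[mu]_x (g x)%:E <= \int[mu]_x (h^\+ x + (EFin \o k)^\- x).
  apply: ge0_le_integral => //.
  - by move=> x _; rewrite lee_fin.
  - exact/measurable_EFinP.
  - apply: emeasurable_funD; first exact: measurable_funepos.
    exact/measurable_funeneg/measurable_EFinP.
  - move=> x _; rewrite funeposE funenegE /h /= -!EFin_max -EFinD lee_fin.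
    have : (g x + k x <= Num.max (g x + k x) 0)%R by rewrite le_max lexx.
    have : (- k x <= Num.max (- k x) 0)%R by rewrite le_max lexx.
    lra.
have hP_inf : \int[mu]_x h^\+ x = +oo.
  apply/eqP; rewrite -leye_eq leNgt; apply/negP => hP_fin.
  move: g_le; rewrite ginf ge0_integralD //.
  - by rewrite leye_eq lt_eqF // lte_add_pinfty.
  - exact: measurable_funepos.
  - exact/measurable_funeneg/measurable_EFinP.
rewrite integralE hP_inf addye // eqe_oppLR /= lt_eqF //.
by move: kfin; rewrite fin_numE => /andP[].
Qed.

Lemma cvg_integral_nondecreasing (f : T -> R) (u : (T -> R)^nat) :
  measurable_fun setT f -> (forall n, mu.-integrable setT (EFin \o u n)) ->
  (forall x, nondecreasing_seq (u ^~ x)) -> (forall x, u n x @[n --> \oo] --> f x) ->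
  \int[mu]_x (u n x)%:E @[n --> \oo] --> \int[mu]_x (f x)%:E.
Proof.
move=> mf iu nd_u cvg_u.
have m_u n : measurable_fun setT (u n) by have /integrableP[/measurable_EFinP] := iu n.
set v := fun n x => (u n x - u 0%N x)%R.
have v0 n x : (0 <= v n x)%R by rewrite subr_ge0; exact: nd_u.
have cvg_v x : v n x @[n --> \oo] --> (f x - u 0%N x)%R.
  by apply: cvgB => //; exact: cvg_cst.
have f_u0 x : (0 <= f x - u 0%N x)%R.
  rewrite subr_ge0 -(cvg_lim _ (cvg_u x)) //.
  apply: (nondecreasing_cvgn_le (nd_u x)).
  by apply/cvg_ex; exists (f x); exact: cvg_u.
have int_uE n : \int[mu]_x (u n x)%:E = \int[mu]_x (v n x)%:E + \int[mu]_x (u 0%N x)%:E.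
  rewrite -ge0_integralD_integrable //; last exact: measurable_funB.
  by apply: eq_integral => x _; rewrite subrK.
have int_fE : \int[mu]_x (f x)%:E =
    \int[mu]_x (f x - u 0%N x)%:E + \int[mu]_x (u 0%N x)%:E.
  rewrite -ge0_integralD_integrable //; last exact: measurable_funB.
  by apply: eq_integral => x _; rewrite subrK.
rewrite int_fE; under eq_fun do rewrite int_uE.
apply: cvgeD.
- exact/fin_num_adde_defl/(integrable_fin_num measurableT (iu 0%N)).
- have -> : \int[mu]_x (f x - u 0%N x)%:E = \int[mu]_x limn (fun n => (v n x)%:E).
    apply: eq_integral => x _; apply/esym/cvg_lim => //.
    by apply: cvg_EFin (cvg_v x); exact: nearW.
  apply: cvg_monotone_convergence => //.
  - by move=> n; apply/measurable_EFinP; exact: measurable_funB.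
  - by move=> n x _; rewrite lee_fin.
  - by move=> x _ m n mn; rewrite lee_fin lerD2r; exact: nd_u.
- exact: cvg_cst.
Qed.

End integral_ge0_shift.

Section integral_affine.
Context {d : measure_display} {T : measurableType d} {R : realType}.
Context {mu : probability T R}.
Variables (c b1 b2 : R) (f1 f2 : T -> R).
Hypotheses (if1 : mu.-integrable setT (EFin \o f1))
           (if2 : mu.-integrable setT (EFin \o f2)).
Local Open Scope ereal_scope.

Let affineE x : (c - b1 * f1 x - b2 * f2 x)%:E =
  ((cst c%:E \- (fun x => b1%:E * (f1 x)%:E)) \- (fun x => b2%:E * (f2 x)%:E)) x.
Proof. by rewrite /= !EFinB !EFinM. Qed.

Let ic : mu.-integrable setT (cst c%:E).
Proof. exact: finite_measure_integrable_cst. Qed.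

Let i1 : mu.-integrable setT (fun x => b1%:E * (f1 x)%:E).
Proof. exact: integrableZl. Qed.

Let i2 : mu.-integrable setT (fun x => b2%:E * (f2 x)%:E).
Proof. exact: integrableZl. Qed.

Lemma integrable_affine :
  mu.-integrable setT (EFin \o (fun x => c - b1 * f1 x - b2 * f2 x)%R).
Proof.
apply: (eq_integrable measurableT _ _ (fun x _ => esym (affineE x))).
by apply: integrableB => //; exact: integrableB.
Qed.

Lemma integral_affine :
  \int[mu]_x (c - b1 * f1 x - b2 * f2 x)%:E =
  c%:E - b1%:E * \int[mu]_x (f1 x)%:E - b2%:E * \int[mu]_x (f2 x)%:E.
Proof.
under eq_integral do rewrite affineE.
rewrite integralB //; last exact: integrableB.
rewrite integralB // !integralZl // integral_cst //.
by rewrite -[c%:E in RHS]mule1; congr (_ * _ - _ - _); exact: probability_setT.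
Qed.

End integral_affine.

(* dQ/dP is only P-a.e. positive; replacing its non-positive values by 1 makes
   [ln] and [powR] well behaved everywhere without changing any P-integral. *)
Definition rn_pos {dT} {T : measurableType dT} {R : realType}
    (Q P : {finite_measure set T -> \bar R}) (x : T) : R :=
  let g := fine ('d (charge_of_finite_measure Q) '/d P x) in
  if 0 < g then g else 1.

Section positive_density.
Context {dT : measure_display} {T : measurableType dT} {R : realType}.
Context {P Q : {finite_measure set T -> \bar R}}.
Hypotheses (PQ : P `<< Q) (QP : Q `<< P).
Local Notation rn := ('d (charge_of_finite_measure Q) '/d P).
Local Notation rho := (rn_pos Q P).

Lemma rn_pos_gt0 x : 0 < rho x.
Proof. by rewrite /rn_pos; case: ifPn. Qed.

Let QP' : charge_of_finite_measure Q `<< P := QP.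

Lemma measurable_fine_rn : measurable_fun setT (fun x => fine (rn x)).
Proof. exact: measurableT_comp. Qed.

Lemma measurable_rn_pos : measurable_fun setT rho.
Proof.
apply: measurable_fun_ifT; last exact: measurable_cst.
- exact: measurable_fun_ltr measurable_fine_rn.
- exact: measurable_fine_rn.
Qed.

Lemma ae_rn_pos : {ae P, forall x, rn x = (rho x)%:E}.
Proof.
pose N := [set x | fine (rn x) <= 0].
have mN : measurable N.
  by rewrite -[N]setTI; apply: measurable_fun_ler => //; exact: measurable_fine_rn.
have QN : Q N = 0%E.
  apply/eqP; rewrite eq_le measure_ge0 andbT.
  rewrite -[Q N]/(charge_of_finite_measure Q N) (Radon_Nikodym_integral QP' mN).
  rewrite -[leRHS](integral0 P N); apply: le_integral => //.
  - exact: integrableS (Radon_Nikodym_integrable QP').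
  - exact: integrable0.
  - move=> x /set_mem Nx; rewrite -[rn x]fineK ?lee_fin //.
    exact: Radon_Nikodym_fin_num.
exists N; split => //; first exact: (null_content_dominatesP P Q).1 PQ N mN QN.
move=> x /= rnx; rewrite /N /= leNgt; apply/negP => g_gt0; apply: rnx.
by rewrite /rn_pos ifT // fineK //; exact: Radon_Nikodym_fin_num.
Qed.

Lemma integral_rn_posM (phi : T -> R) : Q.-integrable setT (EFin \o phi) ->
  (\int[Q]_x (phi x)%:E = \int[P]_x (rho x * phi x)%:E)%E.
Proof.
move=> iphi; rewrite -(Radon_Nikodym_change_of_variables QP measurableT iphi).
have mphi : measurable_fun setT phi by have /integrableP[/measurable_EFinP] := iphi.
apply: ae_eq_integral => //.
- by apply: emeasurable_funM => //; exact/measurable_EFinP.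
- by apply/measurable_EFinP; apply: measurable_funM => //; exact: measurable_rn_pos.
- by move: ae_rn_pos; apply: filterS => x rnx _ /=; rewrite rnx -EFinM mulrC.
Qed.

Lemma integrable_rn_posM (phi : T -> R) : Q.-integrable setT (EFin \o phi) ->
  P.-integrable setT (EFin \o (fun x => rho x * phi x)).
Proof.
move=> iphi; have mphi : measurable_fun setT phi.
  by have /integrableP[/measurable_EFinP] := iphi.
apply/integrableP; split.
  by apply/measurable_EFinP; apply: measurable_funM => //; exact: measurable_rn_pos.
under eq_integral do rewrite /= normrM gtr0_norm ?rn_pos_gt0 //.
have inorm := integrable_norm iphi.
by rewrite -integral_rn_posM //; exact: integrable_lty inorm.
Qed.

End positive_density.

Section alpha_variational.
Context (R : realType) (d : nat) (P Q : probability (d.-tuple R) R) (a : R).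
Hypotheses (PQ : P `<< Q) (QP : Q `<< P) (a0 : a != 0) (a1 : a != 1).
Local Notation rho := (rn_pos Q P).

Let measurable_expRM (c : R) (T : d.-tuple R -> R) : measurable_fun setT T ->
  measurable_fun setT (fun x => expR (c * T x)).
Proof.
move=> mT; apply: measurableT_comp => //; exact: measurable_funM.
Qed.

Let measurable_alpha_gen : measurable_fun setT (fun x => alpha_gen a (rho x)).
Proof.
apply: measurable_funM => //; apply: measurable_funB => //.
exact: measurableT_comp (measurable_powR _) (measurable_rn_pos QP).
Qed.

Lemma alpha_div_rn_pos :
  alpha_div a Q P = (\int[P]_x (alpha_gen a (rho x))%:E)%E.
Proof.
apply: ae_eq_integral => //.
- apply/measurable_EFinP; apply: measurable_funM => //; apply: measurable_funB => //.
  exact: measurableT_comp (measurable_powR _) (measurable_fine_rn QP).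
- exact/measurable_EFinP.
- by move: (ae_rn_pos PQ QP); apply: filterS => x rnx _; rewrite /rn_deriv rnx.
Qed.

Lemma alpha_objective_rn_pos (T : d.-tuple R -> R) : admissible a Q P T ->
  alpha_objective a Q P T = (\int[P]_x (alpha_dual a (rho x) (T x))%:E)%E /\
  P.-integrable setT (EFin \o (fun x => alpha_dual a (rho x) (T x))).
Proof.
case=> mT P_lty Q_lty.
have iQ := ge0_lty_integrable _ (measurable_expRM a _ mT) (fun _ => expR_ge0 _) Q_lty.
have iP := ge0_lty_integrable _ (measurable_expRM (a - 1) _ mT)
  (fun _ => expR_ge0 _) P_lty.
have irho := integrable_rn_posM PQ QP _ iQ.
split; last exact: integrable_affine.
by rewrite integral_affine // -integral_rn_posM.
Qed.

Lemma alpha_objective_le_div (T : d.-tuple R -> R) : admissible a Q P T ->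
  (alpha_objective a Q P T <= alpha_div a Q P)%E.
Proof.
move=> /alpha_objective_rn_pos[-> idual]; rewrite alpha_div_rn_pos.
have gap_ge0 x : 0 <= alpha_gen a (rho x) - alpha_dual a (rho x) (T x).
  by rewrite subr_ge0 alpha_dual_le // rn_pos_gt0.
have -> : (\int[P]_x (alpha_gen a (rho x))%:E =
    \int[P]_x (alpha_gen a (rho x) - alpha_dual a (rho x) (T x))%:E +
    \int[P]_x (alpha_dual a (rho x) (T x))%:E)%E.
  rewrite -ge0_integralD_integrable //; first by under eq_integral do rewrite subrK.
  by apply: measurable_funB => //; apply/measurable_EFinP; exact: measurable_int idual.
by rewrite leeDr // integral_ge0 // => x _; rewrite lee_fin.
Qed.

Lemma alpha_objective_eq_div (T : d.-tuple R -> R) : admissible a Q P T ->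
  {ae P, forall x, rn_deriv Q P x = (expR (- T x))%:E} ->
  alpha_objective a Q P T = alpha_div a Q P.
Proof.
move=> /alpha_objective_rn_pos[-> idual] rnT; rewrite alpha_div_rn_pos.
apply: ae_eq_integral => //; first exact: measurable_int idual.
  exact/measurable_EFinP.
move: rnT (ae_rn_pos PQ QP); apply: filterS2 => x rnT rnx _.
have -> : T x = - ln (rho x).
  by move: rnT; rewrite /rn_deriv rnx => -[->]; rewrite expRK opprK.
by rewrite alpha_dual_lnN // rn_pos_gt0.
Qed.

Lemma admissible_bounded (T : d.-tuple R -> R) (M : R) : measurable_fun setT T ->
  (forall x, `|T x| <= M) -> admissible a Q P T.
Proof.
move=> mT TM.
have expR_lty (mu : probability (d.-tuple R) R) (c : R) :
    (\int[mu]_x (expR (c * T x))%:E < +oo)%E.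
  apply: (@le_lt_trans _ _ (\int[mu]_x (expR (`|c| * M))%:E)%E).
    apply: ge0_le_integral => //.
    - by apply/measurable_EFinP; exact: measurable_expRM.
    - move=> x _; rewrite lee_fin ler_expR (le_trans (ler_norm _)) // normrM.
      exact: ler_wpM2l.
  rewrite integral_cst // -[X in (_ * X)%E]/(mu setT) probability_setT mule1.
  exact: ltry.
by split; [exact: mT | exact: expR_lty | exact: expR_lty].
Qed.

Lemma alpha_div_le_sup :
  (alpha_div a Q P <=
   ereal_sup [set alpha_objective a Q P T | T in admissible a Q P])%E.
Proof.
have mln_rho : measurable_fun setT (fun x => ln (rho x)).
  by apply: measurableT_comp; [exact: measurable_ln | exact: measurable_rn_pos QP].
pose Tn n x := if `|ln (rho x)| <= n%:R then - ln (rho x) else 0.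
have admTn n : admissible a Q P (Tn n).
  apply: (@admissible_bounded _ n%:R).
  - apply: measurable_fun_ifT; last exact: measurable_cst.
    + apply: (measurable_fun_ler (f := fun x => `|ln (rho x)|) (g := cst n%:R)) => //.
      by apply: measurableT_comp; [exact: normr_measurable | exact: mln_rho].
    + exact: measurable_funN.
  - by move=> x; rewrite /Tn; case: ifP => [|_]; rewrite ?normrN ?normr0.
pose u n x := alpha_dual a (rho x) (Tn n x).
have u_int n := (alpha_objective_rn_pos _ (admTn n)).2.
have u_nd x : nondecreasing_seq (u ^~ x).
  move=> n m nm; rewrite /u /Tn; case: ifPn => [hn|_].
    by rewrite (le_trans hn) ?ler_nat.
  by case: ifPn => _ //; rewrite alpha_dual_lnN ?alpha_dual_le // rn_pos_gt0.
have u_cvg x : u n x @[n --> \oo] --> alpha_gen a (rho x).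
  apply: cvg_near_cst; near=> n.
  rewrite /u /Tn ifT ?alpha_dual_lnN ?rn_pos_gt0 //.
  by near: n; exact: nbhs_infty_ger.
rewrite alpha_div_rn_pos.
have := cvg_integral_nondecreasing _ _ measurable_alpha_gen u_int u_nd u_cvg.
move=> /[dup] /cvgP int_u_cvg /cvg_lim <- //.
apply: lime_le => //; apply: nearW => n.
rewrite -(alpha_objective_rn_pos _ (admTn n)).1.
by apply: ereal_sup_ubound; exists (Tn n).
Unshelve. all: by end_near.
Qed.

End alpha_variational.

Theorem proposition1 (R : realType) (d : nat)
    (P Q : probability (d.-tuple R) R) (alpha : R) :
  P `<< Q -> Q `<< P ->
  alpha != 0 -> alpha != 1 ->
  alpha_div alpha Q P =
    ereal_sup [set alpha_objective alpha Q P T | T in admissible alpha Q P]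
  /\
  (forall Tstar : d.-tuple R -> R,
     admissible alpha Q P Tstar ->
     {ae P, forall x, rn_deriv Q P x = (expR (- Tstar x))%:E} ->
     alpha_objective alpha Q P Tstar = alpha_div alpha Q P).
Proof.
move=> PQ QP a0 a1; split; last exact: alpha_objective_eq_div.
apply/eqP; rewrite eq_le alpha_div_le_sup //=.
by apply: ge_ereal_sup => _ [T admT <-]; exact: alpha_objective_le_div.
Qed.
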